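(* Let $n\ge3$ and let $(\mathbb{R}^n,g)$ be the pseudo-Euclidean space with Cartesian coordinates $x=(x_1,\dots,x_n)$ and $g_{ij}=\delta_{ij}\varepsilon_i$, $\varepsilon_i=\pm1$. Let $\xi=\sum_{i=1}^n\alpha_ix_i$ with $\alpha_i\in\mathbb{R}$ and $\sum_{i=1}^n\varepsilon_i\alpha_i^2=\varepsilon_{i_0}\in\{-1,0,1\}$, and let $\varphi(\xi)>0$, $\psi(\xi)$, $N(\xi)>0$ be smooth functions of $\xi$ on an open set $\Omega\subseteq\mathbb{R}^n$. Then $(\Omega,\bar g,N,\psi)$ with $\bar g=g/\varphi^2$ is an electrostatic system if and only if $$(n-2)\varphi''N-\varphi N''-2\varphi'N'+\frac{2\varphi}{N}(\psi')^2=0,$$ $$\varepsilon_{i_0}\Big\{\varphi\varphi''N-(n-1)N(\varphi')^2+\varphi\varphi'N'-\frac{2\varphi^2(\psi')^2}{(n-1)N}\Big\}=0,$$ $$\varepsilon_{i_0}\big\{\varphi N\psi''-(n-2)\varphi'N\psi'-\varphi N'\psi'\big\}=0,$$ $$\varepsilon_{i_0}\big\{\varphi NN''-(n-2)\varphi'NN'-\widehat C^2\varphi(\psi')^2\big\}=0,$$ where $\widehat C^2=\frac{2(n-2)}{n-1}$ and $'$ denotes $d/d\xi$. In particular, if $\sum_i\varepsilon_i\alpha_i^2=0$, the condition reduces to $(n-2)\varphi''N-\varphi N''-2\varphi'N'+\frac{2\varphi}{N}(\psi')^2=0$.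
   Context: Definition (electrostatic system): Let $(M^n,h)$, $n\ge3$, be a semi-Riemannian manifold and $N:M\to\mathbb{R}_{>0}$, $\psi:M\to\mathbb{R}$ smooth. $(M,h,N,\psi)$ is an electrostatic system if $\Delta N=\widehat C^2\frac{|\nabla\psi|^2}{N}$, $\operatorname{div}\big(\frac{\nabla\psi}{N}\big)=0$, and $N\operatorname{Ric}=\nabla^2N-2\frac{\nabla\psi\otimes\nabla\psi}{N}+\frac{2}{(n-1)N}|\nabla\psi|^2h$, with $\widehat C^2=\frac{2(n-2)}{n-1}$ and all operators taken with respect to $h$. *)

From HB Require Import structures.
From mathcomp Require Import all_boot all_order all_algebra.
From mathcomp Require Import all_classical all_reals all_analysis.
Set Implicit Arguments. Unset Strict Implicit. Unset Printing Implicit Defensive.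
Import Order.TTheory GRing.Theory Num.Theory.
Import numFieldNormedType.Exports.
Local Open Scope ring_scope.
Local Open Scope classical_set_scope.

Definition smooth_on (R : realType) (J : set R) (f : R -> R) : Prop :=
  forall (k : nat) (t : R), J t -> derivable (derive1n k f) t 1.

(* Points of R^n are row vectors x, with Cartesian coordinates x_i = x ord0 i. *)
Definition pd (R : realType) (n : nat) (f : 'rV[R]_n -> R) (i : 'I_n)
  : 'rV[R]_n -> R := fun x => derive f x (delta_mx ord0 i).

Definition hinv (R : realType) (n : nat) (h : 'rV[R]_n -> 'M[R]_n) x :=
  invmx (h x).

Definition Gam (R : realType) (n : nat) (h : 'rV[R]_n -> 'M[R]_n)
  (k i j : 'I_n) : 'rV[R]_n -> R := fun x =>
  2^-1 * \sum_(l < n) hinv h x k l *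
    (pd (fun y => h y j l) i x + pd (fun y => h y i l) j x
     - pd (fun y => h y i j) l x).

Definition Ric (R : realType) (n : nat) (h : 'rV[R]_n -> 'M[R]_n)
  (i j : 'I_n) (x : 'rV[R]_n) : R :=
  \sum_(k < n) (pd (Gam h k i j) k x - pd (Gam h k i k) j x
    + \sum_(l < n) (Gam h k k l x * Gam h l i j x - Gam h k j l x * Gam h l i k x)).

Definition Hess (R : realType) (n : nat) (h : 'rV[R]_n -> 'M[R]_n)
  (f : 'rV[R]_n -> R) (i j : 'I_n) (x : 'rV[R]_n) : R :=
  pd (pd f j) i x - \sum_(k < n) Gam h k i j x * pd f k x.

Definition Lap (R : realType) (n : nat) (h : 'rV[R]_n -> 'M[R]_n)
  (f : 'rV[R]_n -> R) (x : 'rV[R]_n) : R :=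
  \sum_(i < n) \sum_(j < n) hinv h x i j * Hess h f i j x.

Definition gradnorm2 (R : realType) (n : nat) (h : 'rV[R]_n -> 'M[R]_n)
  (f : 'rV[R]_n -> R) (x : 'rV[R]_n) : R :=
  \sum_(i < n) \sum_(j < n) hinv h x i j * pd f i x * pd f j x.

Definition gradv (R : realType) (n : nat) (h : 'rV[R]_n -> 'M[R]_n)
  (f : 'rV[R]_n -> R) (i : 'I_n) (x : 'rV[R]_n) : R :=
  \sum_(j < n) hinv h x i j * pd f j x.

Definition divg (R : realType) (n : nat) (h : 'rV[R]_n -> 'M[R]_n)
  (V : 'I_n -> 'rV[R]_n -> R) (x : 'rV[R]_n) : R :=
  \sum_(i < n) (pd (V i) i x + \sum_(k < n) Gam h i i k x * V k x).

Definition Chat2 (R : realType) (n : nat) : R := 2 * (n - 2)%:R / (n - 1)%:R.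

Definition electrostatic (R : realType) (n : nat) (Om : set 'rV[R]_n)
  (h : 'rV[R]_n -> 'M[R]_n) (N psi : 'rV[R]_n -> R) : Prop :=
  forall x, Om x ->
    [/\ 0 < N x,
        Lap h N x = Chat2 R n * gradnorm2 h psi x / N x,
        divg h (fun i y => gradv h psi i y / N y) x = 0 &
        forall i j : 'I_n,
          N x * Ric h i j x =
          Hess h N i j x - 2 * (pd psi i x * pd psi j x) / N x
          + 2 / ((n - 1)%:R * N x) * gradnorm2 h psi x * h x i j].

Definition xi (R : realType) (n : nat) (alpha : 'I_n -> R) (x : 'rV[R]_n) : R :=
  \sum_(i < n) alpha i * x ord0 i.

Definition gbar (R : realType) (n : nat) (eps alpha : 'I_n -> R) (phi : R -> R)
  (x : 'rV[R]_n) : 'M[R]_n :=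
  \matrix_(i, j) ((i == j)%:R * eps i / phi (xi alpha x) ^+ 2).

(* Every quantity entering the electrostatic equations is then a ridge
   function, whose partial derivatives are d_i (F o xi) = alpha_i F'(xi)
   (pd_ridge).  The Christoffel symbols of gbar are (-phi'/phi)(xi) times
   constant coefficients [chris k i j]; the contractions of these coefficients
   needed for the Ricci tensor, the Hessian and the Laplacian are computed
   once in section ChristoffelPattern, with e0 = sum_i eps_i alpha_i^2.
   Substituting, each field equation becomes a nonvanishing multiple of the
   ODE expressions of the theorem (einstein_residual, laplace_residual,
   maxwell_residual).  The Einstein equation is a combination of the tensors
   alpha alpha^T and diag(eps), which are linearly independent
   (rank_one_diag_independent), so it yields two scalar equations. *)

From HB Require Import structures.
From mathcomp Require Import all_boot all_order all_algebra.
From mathcomp Require Import all_classical all_reals all_analysis.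
From mathcomp Require Import ring.
Import Order.TTheory GRing.Theory Num.Theory.
Import numFieldNormedType.Exports.
Local Open Scope ring_scope.
Local Open Scope classical_set_scope.
Set Implicit Arguments. Unset Strict Implicit.

Lemma sum_kronecker (R : pzRingType) n (F : 'I_n -> R) j :
  \sum_(k < n) (k == j)%:R * F k = F j.
Proof.
rewrite (bigD1 j) //= eqxx mul1r big1 ?addr0 // => k /negbTE ->.
by rewrite mul0r.
Qed.

Lemma sum_kronecker_sym (R : pzRingType) n (F : 'I_n -> R) j :
  \sum_(k < n) (j == k)%:R * F k = F j.
Proof.
by rewrite -[RHS](sum_kronecker F); apply: eq_bigr => k _; rewrite eq_sym.
Qed.

Section OneVariableCalculus.
Variable R : realType.
Implicit Types (f g : R -> R) (J : set R) (t a b c : R).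

Lemma is_derive1_derive1 f t : derivable f t 1 -> is_derive t 1 f (derive1 f t).
Proof. by move=> df; split; rewrite // derive1E. Qed.

Lemma is_derive1_scale c f t a :
  is_derive t 1 f a -> is_derive t 1 (fun s => c * f s) (c * a).
Proof.
move=> [df <-]; split; first exact: derivableM.
by rewrite deriveMl.
Qed.

Lemma is_derive1_mul f g t a b : is_derive t 1 f a -> is_derive t 1 g b ->
  is_derive t 1 (fun s => f s * g s) (a * g t + f t * b).
Proof.
move=> [df <-] [dg <-]; split; first exact: derivableM.
by rewrite (deriveM df dg) /GRing.scale /= addrC mulrC.
Qed.

Lemma is_derive1_inv f t a : f t != 0 -> is_derive t 1 f a ->
  is_derive t 1 (fun s => (f s)^-1) (- a / f t ^+ 2).
Proof.
move=> f0 [df <-]; split; first exact: derivableV.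
by rewrite (deriveV f0 df); change (- (f t ^- 2) * 'D_1 f t = - 'D_1 f t / f t ^+ 2);
  rewrite !mulNr mulrC.
Qed.

Lemma smooth_derivable J f t : smooth_on J f -> J t -> derivable f t 1.
Proof. by move=> sf Jt; exact: (sf 0%N t Jt). Qed.

Lemma smooth_derivable2 J f t : smooth_on J f -> J t -> derivable (derive1 f) t 1.
Proof. by move=> sf Jt; exact: (sf 1%N t Jt). Qed.

End OneVariableCalculus.

Section RidgeFunctions.
Variables (R : realType) (n : nat) (alpha : 'I_n -> R).
Local Notation X := (xi alpha).

Lemma xi_shift y i (h : R) : X (h *: delta_mx ord0 i + y) = h * alpha i + X y.
Proof.
rewrite /xi; under eq_bigr do rewrite !mxE mulrDr.
rewrite big_split /=; congr (_ + _).
under eq_bigr do rewrite mulrCA mulrC.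
by rewrite -mulr_suml; under eq_bigr do rewrite mulrC; rewrite sum_kronecker mulrC.
Qed.

Lemma pd_ridge (F : R -> R) y i : derivable F (X y) 1 ->
  pd (F \o X) i y = alpha i * derive1 F (X y).
Proof.
move=> dF; have -> : pd (F \o X) i y = derive F (X y) (alpha i).
  rewrite /pd /derive.
  have -> : (fun h : R => h^-1 *: (((F \o X) \o shift y) (h *: delta_mx ord0 i)
               - (F \o X) y)) =
            (fun h : R => h^-1 *: ((F \o shift (X y)) (h *: alpha i) - F (X y))).
    by apply/funext => h /=; rewrite xi_shift.
  reflexivity.
rewrite derive1E' ?deriveE; try exact/derivable1_diffP.
by rewrite -{1}[alpha i]mulr1 linearZ.
Qed.

Lemma pd_ridge_near (f : 'rV[R]_n -> R) (F : R -> R) y i d :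
  (\forall z \near y, f z = F (X z)) -> is_derive (X y) 1 F d ->
  pd f i y = alpha i * d.
Proof.
move=> fE [dF <-]; rewrite -derive1E -pd_ridge // /pd.
exact: near_eq_derive.
Qed.

End RidgeFunctions.

Section ChristoffelPattern.
(* For the conformally flat metric g / phi(xi)^2, the Christoffel symbols are
   Gamma^k_ij = chris k i j * (-phi'/phi)(xi) with the constant coefficients
   below; the Ricci tensor then reduces to the following finite contractions. *)
Variables (R : realType) (n : nat) (eps alpha : 'I_n -> R).
Hypothesis eps_sq : forall k, eps k * eps k = 1.
Let e0 := \sum_k eps k * alpha k ^+ 2.

Definition chris (k i j : 'I_n) : R :=
  (j == k)%:R * alpha i + (i == k)%:R * alpha j
  - (i == j)%:R * eps i * eps k * alpha k.

Lemma chris_contract_alpha i j :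
  \sum_k alpha k * chris k i j = 2 * alpha i * alpha j - (i == j)%:R * eps i * e0.
Proof.
rewrite (eq_bigr (fun k => (j == k)%:R * (alpha k * alpha i)
   + (i == k)%:R * (alpha k * alpha j)
   - ((i == j)%:R * eps i) * (eps k * alpha k ^+ 2))); last first.
  by move=> k _; rewrite /chris; ring.
by rewrite sumrB big_split /= !sum_kronecker_sym -mulr_sumr /e0; ring.
Qed.

Lemma chris_trace_right i : \sum_k chris k i k = n%:R * alpha i.
Proof.
rewrite (eq_bigr (fun k => alpha i + ((i == k)%:R * alpha k
   - (i == k)%:R * (eps i * eps k * alpha k)))); last first.
  by move=> k _; rewrite /chris eqxx /=; ring.
by rewrite big_split /= sumrB !sum_kronecker_sym eps_sq sumr_const card_ord; ring.
Qed.

Lemma chris_trace_left l : \sum_k chris k k l = n%:R * alpha l.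
Proof.
rewrite (eq_bigr (fun k => alpha l + ((l == k)%:R * alpha k
   - (l == k)%:R * (eps k * eps k * alpha k)))); last first.
  by move=> k _; rewrite /chris eqxx eq_sym /=; ring.
by rewrite big_split /= sumrB !sum_kronecker_sym eps_sq sumr_const card_ord; ring.
Qed.

Lemma chris_contract_eps i j :
  \sum_k eps j * eps k * alpha k * chris j i k = (i == j)%:R * eps j * e0.
Proof.
rewrite (eq_bigr (fun k => (k == j)%:R * (eps j * eps k * alpha k * alpha i)
   + (i == j)%:R * eps j * (eps k * alpha k ^+ 2)
   - (i == k)%:R * (eps i * eps k * (eps j * eps j) * alpha j * alpha k))); last first.
  by move=> k _; rewrite /chris; ring.
rewrite sumrB big_split /= sum_kronecker sum_kronecker_sym -mulr_sumr !eps_sq.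
by rewrite /e0; ring.
Qed.

Lemma chris_square i j :
  \sum_k \sum_l chris k j l * chris l i k =
  (n%:R + 2) * alpha i * alpha j - 2 * (i == j)%:R * eps i * e0.
Proof.
have chrisZ k l (c : R) : chris k j l * c = (l == k)%:R * (alpha j * c)
    + (j == k)%:R * (alpha l * c) - (j == l)%:R * (eps j * eps k * alpha k * c).
  by rewrite /chris; ring.
rewrite (eq_bigr (fun k => alpha j * chris k i k
   + (j == k)%:R * (2 * alpha i * alpha k - (i == k)%:R * eps i * e0)
   - eps j * eps k * alpha k * chris j i k)); last first.
  move=> k _; under eq_bigr do rewrite chrisZ.
  by rewrite sumrB big_split /= sum_kronecker -!mulr_sumr chris_contract_alpha
    sum_kronecker_sym.
rewrite sumrB big_split /= -mulr_sumr chris_trace_right sum_kronecker_sym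
  chris_contract_eps.
have -> : (i == j)%:R * eps j = (i == j)%:R * eps i :> R.
  by case: eqVneq => [->|]; rewrite ?mul0r.
ring.
Qed.

Lemma chris_trace_square i j : \sum_k \sum_l chris k k l * chris l i j =
  n%:R * (2 * alpha i * alpha j - (i == j)%:R * eps i * e0).
Proof.
rewrite exchange_big /= -chris_contract_alpha mulr_sumr; apply: eq_bigr => l _.
by rewrite -mulr_suml chris_trace_left mulrA.
Qed.

End ChristoffelPattern.

(* Linear independence of alpha alpha^T and the diagonal metric diag(eps):
   this splits the Einstein equation into its two scalar components. *)
Lemma rank_one_diag_independent (R : realType) n (eps alpha : 'I_n -> R) (A B : R) :
  (2 <= n)%N -> (forall k, eps k != 0) -> (exists i, alpha i != 0) ->
  (forall i j, A * (alpha i * alpha j) + B * ((i == j)%:R * eps i) = 0) ->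
  A = 0 /\ B = 0.
Proof.
move=> n2 eps_nz [i0 a0] H.
have [j ji0] : exists j : 'I_n, j != i0.
  have n0 : (0 < n)%N by apply: leq_trans n2.
  case: (eqVneq i0 (Ordinal n0)) => [->|ne]; last by exists (Ordinal n0); rewrite eq_sym.
  by exists (Ordinal n2).
have Hjj := H j j; have Hii := H i0 i0; have Hij := H i0 j.
rewrite eqxx /= mul1r in Hjj; rewrite eqxx /= mul1r in Hii.
rewrite eq_sym (negbTE ji0) mul0r mulr0 addr0 in Hij.
have [aj|aj] := eqVneq (alpha j) 0.
  have B0 : B = 0.
    move/eqP: Hjj; rewrite aj !mulr0 add0r mulf_eq0 (negbTE (eps_nz j)) orbF.
    by move/eqP.
  split=> //; move/eqP: Hii; rewrite B0 mul0r addr0.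
  by rewrite !mulf_eq0 (negbTE a0) !orbF => /eqP.
have A0 : A = 0.
  by move/eqP: Hij; rewrite !mulf_eq0 (negbTE a0) (negbTE aj) !orbF => /eqP.
split=> //; move/eqP: Hii; rewrite A0 mul0r add0r.
by rewrite mulf_eq0 (negbTE (eps_nz i0)) orbF => /eqP.
Qed.

Section RidgeElectrostatics.
Variables (R : realType) (n : nat) (eps alpha : 'I_n -> R) (e0 : R)
  (J : set R) (Om : set 'rV[R]_n) (phi psi N : R -> R).
Hypothesis n_ge3 : (3 <= n)%N.
Hypothesis eps_sq : forall k, eps k * eps k = 1.
Hypothesis alpha_nz : exists i, alpha i != 0.
Hypothesis e0E : \sum_k eps k * alpha k ^+ 2 = e0.
Hypothesis phi_smooth : smooth_on J phi.
Hypothesis psi_smooth : smooth_on J psi.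
Hypothesis N_smooth : smooth_on J N.
Hypothesis Om_open : open Om.
Hypothesis Om_J : forall x, Om x -> J (xi alpha x).
Hypothesis phi_pos : forall x, Om x -> 0 < phi (xi alpha x).
Hypothesis N_pos : forall x, Om x -> 0 < N (xi alpha x).

Local Notation h := (gbar eps alpha phi).
Local Notation X := (xi alpha).
Local Notation c := (chris eps alpha).

Lemma near_Om x (P : 'rV[R]_n -> Prop) :
  Om x -> (forall z, Om z -> P z) -> \forall z \near x, P z.
Proof. by move=> Omx HP; apply: filterS HP _; apply: open_nbhs_nbhs. Qed.

Lemma phi_neq0 y : Om y -> phi (X y) != 0.
Proof. by move=> /phi_pos /lt0r_neq0. Qed.

Lemma N_neq0 y : Om y -> N (X y) != 0.
Proof. by move=> /N_pos /lt0r_neq0. Qed.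

Lemma gbarE y i j : h y i j = (i == j)%:R * eps i / phi (X y) ^+ 2.
Proof. by rewrite /gbar mxE. Qed.

Lemma gbar_inv y i j : Om y -> hinv h y i j = (i == j)%:R * eps i * phi (X y) ^+ 2.
Proof.
move=> Omy; have p0 := phi_neq0 Omy.
set B := \matrix_(i, j) ((i == j)%:R * eps i * phi (X y) ^+ 2 : R).
have hB : h y *m B = 1%:M.
  apply/matrixP => a b; rewrite !mxE; under eq_bigr do rewrite !mxE.
  rewrite (eq_bigr (fun k => (k == a)%:R * ((a == b)%:R * eps a * eps a
    * (phi (X y) ^+ 2 / phi (X y) ^+ 2)))); last first.
    by move=> k _; have [->|ka] := eqVneq k a; rewrite /=; ring.
  by rewrite sum_kronecker divff ?expf_neq0 // mulr1 -mulrA eps_sq mulr1.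
have [h_unit _] := mulmx1_unit hB.
have -> : hinv h y = B by rewrite /hinv -[RHS](mulKmx h_unit B) hB mulmx1.
by rewrite mxE.
Qed.

Lemma contract_gbar_inv y (F : 'I_n -> 'I_n -> R) : Om y ->
  \sum_i \sum_j hinv h y i j * F i j = phi (X y) ^+ 2 * \sum_i eps i * F i i.
Proof.
move=> Omy; rewrite mulr_sumr; apply: eq_bigr => i _.
under eq_bigr do rewrite gbar_inv //.
rewrite (eq_bigr (fun j => (i == j)%:R * (eps i * phi (X y) ^+ 2 * F i j))).
  by rewrite sum_kronecker_sym; ring.
by move=> j _; ring.
Qed.

Lemma pd_smooth F x i : Om x -> smooth_on J F ->
  pd (F \o X) i x = alpha i * derive1 F (X x).
Proof. by move=> Omx sF; apply: pd_ridge; exact: smooth_derivable sF (Om_J Omx). Qed.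

Lemma pd2_smooth F x i j : Om x -> smooth_on J F ->
  pd (pd (F \o X) j) i x = alpha i * (alpha j * derive1 (derive1 F) (X x)).
Proof.
move=> Omx sF; apply: (@pd_ridge_near _ _ _ _ (fun s => alpha j * derive1 F s)).
  by apply: near_Om => // z Omz; rewrite pd_smooth.
exact/is_derive1_scale/is_derive1_derive1/(smooth_derivable2 sF (Om_J Omx)).
Qed.

Lemma pd_gbar y i j l : Om y -> pd (fun z => h z i j) l y =
  alpha l * ((i == j)%:R * eps i * (- 2 * derive1 phi (X y) / phi (X y) ^+ 3)).
Proof.
move=> Omy; have p0 := phi_neq0 Omy.
have dphi := is_derive1_derive1 (smooth_derivable phi_smooth (Om_J Omy)).
apply: (@pd_ridge_near _ _ _ _ (fun s => (i == j)%:R * eps i * (phi s * phi s)^-1)).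
  by apply: near_Om => // z _; rewrite gbarE expr2.
apply: (is_derive_eq (is_derive1_scale _
  (is_derive1_inv (f := fun s => phi s * phi s) (mulf_neq0 p0 p0)
    (is_derive1_mul dphi dphi)))).
by field.
Qed.

(* gam = -phi'/phi is the common scalar factor of the Christoffel symbols. *)
Definition gam t := - derive1 phi t / phi t.
Definition dgam t :=
  - (derive1 (derive1 phi) t * phi t - derive1 phi t ^+ 2) / phi t ^+ 2.

Lemma Gam_gbar y k i j : Om y -> Gam h k i j y = c k i j * gam (X y).
Proof.
move=> Omy; have p0 := phi_neq0 Omy.
have kronecker_eps a b : (a == b)%:R * (eps b * eps a) = (a == b)%:R :> R.
  by have [->|] := eqVneq a b; rewrite ?eps_sq ?mulr1 ?mul0r.
rewrite /Gam; under eq_bigr do rewrite gbar_inv // !pd_gbar //.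
set G := - 2 * derive1 phi (X y) / phi (X y) ^+ 3.
rewrite (eq_bigr (fun l => (k == l)%:R * (eps k * phi (X y) ^+ 2 *
   (alpha i * ((j == l)%:R * eps j * G) + alpha j * ((i == l)%:R * eps i * G)
    - alpha l * ((i == j)%:R * eps i * G))))); last by move=> l _; ring.
rewrite sum_kronecker_sym.
transitivity (gam (X y) * ((j == k)%:R * (eps k * eps j) * alpha i
   + (i == k)%:R * (eps k * eps i) * alpha j - (i == j)%:R * eps i * eps k * alpha k)).
  by rewrite /gam /G; field.
by rewrite !kronecker_eps /chris; ring.
Qed.

Lemma pd_Gam x k i j l : Om x ->
  pd (Gam h k i j) l x = alpha l * (c k i j * dgam (X x)).
Proof.
move=> Omx; have p0 := phi_neq0 Omx.
have d0 := is_derive1_derive1 (smooth_derivable phi_smooth (Om_J Omx)).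
have d1 := is_derive1_derive1 (smooth_derivable2 phi_smooth (Om_J Omx)).
apply: (@pd_ridge_near _ _ _ _
  (fun s => c k i j * ((-1 * derive1 phi s) * (phi s)^-1))).
  by apply: near_Om => // z Omz; rewrite Gam_gbar // /gam /=; ring.
apply: (is_derive_eq (is_derive1_scale _
  (is_derive1_mul (is_derive1_scale _ d1) (is_derive1_inv p0 d0)))).
by rewrite /dgam; field.
Qed.

Lemma Hess_gbar x i j : Om x ->
  Hess h (N \o X) i j x = alpha i * alpha j * derive1 (derive1 N) (X x)
   - gam (X x) * derive1 N (X x) * (2 * alpha i * alpha j - (i == j)%:R * eps i * e0).
Proof.
move=> Omx; rewrite /Hess pd2_smooth //.
under eq_bigr do rewrite Gam_gbar // pd_smooth //.
rewrite -e0E -chris_contract_alpha mulr_sumr.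
have -> : \sum_k c k i j * gam (X x) * (alpha k * derive1 N (X x)) =
          \sum_k gam (X x) * derive1 N (X x) * (alpha k * c k i j).
  by apply: eq_bigr => k _; ring.
ring.
Qed.

Lemma Ric_gbar x i j : Om x ->
  Ric h i j x = dgam (X x) * (2 * alpha i * alpha j - (i == j)%:R * eps i * e0)
    - alpha j * dgam (X x) * (n%:R * alpha i)
    + gam (X x) ^+ 2 * (n%:R * (2 * alpha i * alpha j - (i == j)%:R * eps i * e0)
        - ((n%:R + 2) * alpha i * alpha j - 2 * (i == j)%:R * eps i * e0)).
Proof.
move=> Omx; set g := gam (X x); set dg := dgam (X x).
have quadratic : \sum_(k < n) (\sum_(l < n) c k k l * c l i j - \sum_(l < n) c k j l * c l i k)
    = n%:R * (2 * alpha i * alpha j - (i == j)%:R * eps i * e0)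
      - ((n%:R + 2) * alpha i * alpha j - 2 * (i == j)%:R * eps i * e0).
  rewrite sumrB -e0E; congr (_ - _); first exact: chris_trace_square.
  exact: chris_square.
rewrite /Ric (eq_bigr (fun k => dg * (alpha k * c k i j) - (alpha j * dg) * c k i k
   + g ^+ 2 * (\sum_l c k k l * c l i j - \sum_l c k j l * c l i k))); last first.
  move=> k _; rewrite !pd_Gam //; congr (_ + _); first by rewrite /dg; ring.
  rewrite -sumrB mulr_sumr; apply: eq_bigr => l _; rewrite !Gam_gbar //.
  by rewrite /g; ring.
rewrite big_split sumrB /= -[\sum_(k < n) dg * _]mulr_sumr.
rewrite -[\sum_(k < n) (alpha j * dg) * _]mulr_sumr -[\sum_(k < n) g ^+ 2 * _]mulr_sumr.
by rewrite chris_contract_alpha (chris_trace_right alpha eps_sq) quadratic e0E.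
Qed.

Lemma gradnorm2_gbar x : Om x ->
  gradnorm2 h (psi \o X) x = phi (X x) ^+ 2 * e0 * derive1 psi (X x) ^+ 2.
Proof.
move=> Omx; rewrite /gradnorm2 -e0E.
under eq_bigr do under eq_bigr do rewrite -mulrA.
rewrite contract_gbar_inv // -mulrA mulr_suml; congr (_ * _).
by apply: eq_bigr => k _; rewrite !pd_smooth //; ring.
Qed.

Lemma Lap_gbar x : Om x ->
  Lap h (N \o X) x = phi (X x) ^+ 2 * (e0 * derive1 (derive1 N) (X x)
     - gam (X x) * derive1 N (X x) * (2 - n%:R) * e0).
Proof.
move=> Omx; rewrite /Lap contract_gbar_inv //; congr (_ * _).
under eq_bigr do rewrite Hess_gbar // eqxx.
rewrite (eq_bigr (fun k => eps k * alpha k ^+ 2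
     * (derive1 (derive1 N) (X x) - 2 * gam (X x) * derive1 N (X x))
   + (eps k * eps k) * (gam (X x) * derive1 N (X x) * e0))); last first.
  by move=> k _ /=; ring.
rewrite big_split /= -mulr_suml e0E.
under eq_bigr do rewrite eps_sq mul1r.
by rewrite sumr_const card_ord -mulr_natl; ring.
Qed.

Definition W t := phi t * phi t * derive1 psi t * (N t)^-1.
Definition dW t := ((derive1 phi t * phi t + phi t * derive1 phi t) * derive1 psi t
   + phi t * phi t * derive1 (derive1 psi) t) * (N t)^-1
   + phi t * phi t * derive1 psi t * (- derive1 N t / N t ^+ 2).

Lemma field_gbar z i : Om z ->
  gradv h (psi \o X) i z / (N \o X) z = eps i * alpha i * W (X z).
Proof.
move=> Omz; rewrite /gradv; under eq_bigr do rewrite gbar_inv // pd_smooth //.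
rewrite (eq_bigr (fun j => (i == j)%:R
  * (eps i * phi (X z) ^+ 2 * (alpha j * derive1 psi (X z))))).
  by rewrite sum_kronecker_sym /W /=; ring.
by move=> j _; ring.
Qed.

Lemma pd_field x i : Om x ->
  pd (fun y => gradv h (psi \o X) i y / (N \o X) y) i x =
  alpha i * (eps i * alpha i * dW (X x)).
Proof.
move=> Omx; have M0 := N_neq0 Omx; have Jx := Om_J Omx.
have dphi := is_derive1_derive1 (smooth_derivable phi_smooth Jx).
have dpsi := is_derive1_derive1 (smooth_derivable2 psi_smooth Jx).
have dN := is_derive1_derive1 (smooth_derivable N_smooth Jx).
apply: (@pd_ridge_near _ _ _ _ (fun s => eps i * alpha i * W s)).
  by apply: near_Om => // z Omz; rewrite field_gbar.
apply: (is_derive_eq (is_derive1_scale _ (is_derive1_mul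
  (is_derive1_mul (is_derive1_mul dphi dphi) dpsi) (is_derive1_inv M0 dN)))).
by rewrite /dW.
Qed.

Lemma div_field_gbar x : Om x ->
  divg h (fun i y => gradv h (psi \o X) i y / (N \o X) y) x =
  e0 * dW (X x) + n%:R * gam (X x) * W (X x) * e0.
Proof.
move=> Omx; rewrite /divg big_split /= -e0E; congr (_ + _).
  by rewrite mulr_suml; apply: eq_bigr => k _; rewrite pd_field //; ring.
under eq_bigr do under eq_bigr do rewrite Gam_gbar // field_gbar //.
rewrite exchange_big /= mulr_sumr; apply: eq_bigr => k _.
rewrite (eq_bigr (fun i => c i i k * (gam (X x) * eps k * alpha k * W (X x)))).
  by rewrite -mulr_suml (chris_trace_left alpha eps_sq); ring.
by move=> i _; ring.
Qed.

Definition ode_ridge t :=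
  (n - 2)%:R * derive1 (derive1 phi) t * N t - phi t * derive1 (derive1 N) t
  - 2 * derive1 phi t * derive1 N t + 2 * phi t / N t * derive1 psi t ^+ 2.

Definition ode_metric t :=
  phi t * derive1 (derive1 phi) t * N t - (n - 1)%:R * N t * derive1 phi t ^+ 2
  + phi t * derive1 phi t * derive1 N t
  - 2 * phi t ^+ 2 * derive1 psi t ^+ 2 / ((n - 1)%:R * N t).

Definition ode_maxwell t :=
  phi t * N t * derive1 (derive1 psi) t - (n - 2)%:R * derive1 phi t * N t * derive1 psi t
  - phi t * derive1 N t * derive1 psi t.

Definition ode_laplace t :=
  phi t * N t * derive1 (derive1 N) t - (n - 2)%:R * derive1 phi t * N t * derive1 N t
  - Chat2 R n * phi t * derive1 psi t ^+ 2.

Lemma natr_sub1 : (n - 1)%:R = n%:R - 1 :> R.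
Proof. by rewrite natrB //; apply: leq_trans n_ge3. Qed.

Lemma natr_sub2 : (n - 2)%:R = n%:R - 2 :> R.
Proof. by rewrite natrB //; apply: leq_trans n_ge3. Qed.

Lemma natr_sub1_neq0 : n%:R - 1 != 0 :> R.
Proof. by rewrite -natr_sub1 pnatr_eq0 -lt0n subn_gt0; apply: leq_trans n_ge3. Qed.

Lemma einstein_residual x i j : Om x ->
  N (X x) * Ric h i j x - (Hess h (N \o X) i j x
    - 2 * (pd (psi \o X) i x * pd (psi \o X) j x) / N (X x)
    + 2 / ((n - 1)%:R * N (X x)) * gradnorm2 h (psi \o X) x * h x i j) =
  (phi (X x))^-1 * ode_ridge (X x) * (alpha i * alpha j)
  + (phi (X x) ^+ 2)^-1 * (e0 * ode_metric (X x)) * ((i == j)%:R * eps i).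
Proof.
move=> Omx; have p0 := phi_neq0 Omx; have M0 := N_neq0 Omx.
rewrite Ric_gbar // Hess_gbar // gradnorm2_gbar // gbarE !pd_smooth //.
rewrite /ode_ridge /ode_metric /gam /dgam natr_sub1 natr_sub2.
by field; rewrite p0 M0 natr_sub1_neq0.
Qed.

Lemma laplace_residual x : Om x ->
  Lap h (N \o X) x - Chat2 R n * gradnorm2 h (psi \o X) x / N (X x) =
  phi (X x) / N (X x) * (e0 * ode_laplace (X x)).
Proof.
move=> Omx; have p0 := phi_neq0 Omx; have M0 := N_neq0 Omx.
rewrite Lap_gbar // gradnorm2_gbar // /ode_laplace /Chat2 /gam natr_sub1 natr_sub2.
by field; rewrite p0 M0 natr_sub1_neq0.
Qed.

Lemma maxwell_residual x : Om x ->
  divg h (fun i y => gradv h (psi \o X) i y / (N \o X) y) x =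
  phi (X x) / N (X x) ^+ 2 * (e0 * ode_maxwell (X x)).
Proof.
move=> Omx; have p0 := phi_neq0 Omx; have M0 := N_neq0 Omx.
rewrite div_field_gbar // /ode_maxwell /gam /W /dW natr_sub2.
by field; rewrite p0 M0.
Qed.

Lemma electrostatic_at_iff x : Om x ->
  [/\ 0 < (N \o X) x,
      Lap h (N \o X) x = Chat2 R n * gradnorm2 h (psi \o X) x / (N \o X) x,
      divg h (fun i y => gradv h (psi \o X) i y / (N \o X) y) x = 0 &
      forall i j : 'I_n,
        (N \o X) x * Ric h i j x =
        Hess h (N \o X) i j x - 2 * (pd (psi \o X) i x * pd (psi \o X) j x) / (N \o X) x
        + 2 / ((n - 1)%:R * (N \o X) x) * gradnorm2 h (psi \o X) x * h x i j]
  <-> [/\ ode_ridge (X x) = 0, e0 * ode_metric (X x) = 0,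
          e0 * ode_maxwell (X x) = 0 & e0 * ode_laplace (X x) = 0].
Proof.
move=> Omx; have p0 := phi_neq0 Omx; have M0 := N_neq0 Omx.
have pM : phi (X x) / N (X x) != 0 by rewrite mulf_neq0 ?invr_eq0.
have pM2 : phi (X x) / N (X x) ^+ 2 != 0 by rewrite mulf_neq0 ?invr_eq0 ?expf_neq0.
have eps_nz k : eps k != 0.
  by apply/eqP => ek; move: (eps_sq k); rewrite ek mul0r => /esym/eqP; rewrite oner_eq0.
split=> [[_ Lap_eq div_eq Ric_eq] | [ridge metric maxwell laplace]].
  have [ridge metric] : ode_ridge (X x) = 0 /\ e0 * ode_metric (X x) = 0.
    have n_ge2 : (2 <= n)%N by apply: ltnW.
    have [] := rank_one_diag_independent n_ge2 eps_nz alpha_nz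
      (A := (phi (X x))^-1 * ode_ridge (X x))
      (B := (phi (X x) ^+ 2)^-1 * (e0 * ode_metric (X x))).
      by move=> i j; rewrite -einstein_residual // Ric_eq subrr.
    move=> /eqP; rewrite mulf_eq0 invr_eq0 (negbTE p0) => /eqP -> /eqP.
    by rewrite mulf_eq0 invr_eq0 expf_eq0 (negbTE p0) andbF => /eqP.
  split=> //.
    by move/eqP: div_eq; rewrite maxwell_residual // mulf_eq0 (negbTE pM2) => /eqP.
  by move/eqP: Lap_eq; rewrite -subr_eq0 laplace_residual // mulf_eq0 (negbTE pM) => /eqP.
split; first exact: N_pos.
- by apply/eqP; rewrite -subr_eq0 laplace_residual // laplace mulr0.
- by rewrite maxwell_residual // maxwell mulr0.
- move=> i j; apply/eqP; rewrite -subr_eq0 einstein_residual //.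
  by rewrite ridge metric !mulr0 !mul0r addr0.
Qed.

End RidgeElectrostatics.

Unset Implicit Arguments. Set Strict Implicit.

Theorem theorem1p2 (R : realType) (n : nat) (eps alpha : 'I_n -> R) (e0 : R)
  (J : set R) (Om : set 'rV[R]_n) (phi psi N : R -> R) :
  (3 <= n)%N ->
  (forall i, eps i = 1 \/ eps i = -1) ->
  (exists i, alpha i != 0) ->
  \sum_(i < n) eps i * alpha i ^+ 2 = e0 ->
  (e0 = -1 \/ e0 = 0 \/ e0 = 1) ->
  open J -> smooth_on J phi -> smooth_on J psi -> smooth_on J N ->
  open Om -> (forall x, Om x -> J (xi alpha x)) ->
  (forall x, Om x -> 0 < phi (xi alpha x)) ->
  (forall x, Om x -> 0 < N (xi alpha x)) ->
  electrostatic Om (gbar eps alpha phi) (N \o xi alpha) (psi \o xi alpha) <->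
  (forall x, Om x ->
    let t := xi alpha x in
    let p := phi t in let p1 := derive1 phi t in
    let p2 := derive1 (derive1 phi) t in
    let M := N t in let M1 := derive1 N t in
    let M2 := derive1 (derive1 N) t in
    let s1 := derive1 psi t in
    let s2 := derive1 (derive1 psi) t in
    [/\ (n - 2)%:R * p2 * M - p * M2 - 2 * p1 * M1 + 2 * p / M * s1 ^+ 2 = 0,
        e0 * (p * p2 * M - (n - 1)%:R * M * p1 ^+ 2 + p * p1 * M1
              - 2 * p ^+ 2 * s1 ^+ 2 / ((n - 1)%:R * M)) = 0,
        e0 * (p * M * s2 - (n - 2)%:R * p1 * M * s1 - p * M1 * s1) = 0 &
        e0 * (p * M * M2 - (n - 2)%:R * p1 * M * M1
              - Chat2 R n * p * s1 ^+ 2) = 0]).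
Proof.
move=> n_ge3 eps_pm alpha_nz e0E _ _ phi_smooth psi_smooth N_smooth Om_open Om_J
  phi_pos N_pos.
have eps_sq k : eps k * eps k = 1.
  by case: (eps_pm k) => ->; rewrite ?mulrNN mulr1.
have at_x := electrostatic_at_iff n_ge3 eps_sq alpha_nz e0E phi_smooth psi_smooth
  N_smooth Om_open Om_J phi_pos N_pos.
by split=> H x Omx; apply/(at_x x Omx); exact: H.
Qed.
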